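(* Fix a partition $\Pi$ of $V(G)$ into sets of sizes divisible by $r$. Suppose each $f_v$ is $K_v$-Lipschitz and let $K_{\max}=\max_vK_v$. If $\mathcal P$ is sampled uniformly from the set of partitions of $V(G)$ into $n$ sets of size $r$ each contained in a single part of $\Pi$, and $T=T_{\vec B,\mathcal P}$ with $\vec B$ independent of $\mathcal P$, then $$\mathbb E_{\mathcal P}\big|\mathbb E_{\vec B}(\xi\mid\mathcal P)\big|\le\frac{2K_{\max}|\Pi|}{rn}.$$
   Context: Let $n,p,q$ be positive integers, $r=p+q$, $G$ a finite simple graph with $|V(G)|=rn$ and no isolated vertices; $\mathcal N(v)$, $d(v)$ neighbor set and degree. For each $v$, $f_v:2^{\mathcal N(v)}\to\mathbb R$ with $f_v(\emptyset)=0$. $\sigma_T(v)=q$ if $v\in T$, $-p$ otherwise; for $|T|=pn$, $\xi=\frac1{pqn}\sum_v\sigma_T(v)f_v(T\cap\mathcal N(v))$. $f_v$ is $K_v$-Lipschitz ($K_v>0$) if $|f_v(A)-f_v(A')|\le K_v|A\triangle A'|/d(v)$ for all $A,A'\subseteq\mathcal N(v)$. Restricted randomization: for $\mathcal P=(S_1,\dots,S_n)$, $S_i=\{w_i^1,\dots,w_i^r\}$, $B_i$ i.i.d. uniform $p$-subsets of $\{1,\dots,r\}$, $T_{\vec B,\mathcal P}=\{w_i^j:j\in B_i\}$. *)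

From HB Require Import structures.
From mathcomp Require Import all_boot all_order all_algebra.
Set Implicit Arguments. Unset Strict Implicit. Unset Printing Implicit Defensive.
Import Order.TTheory GRing.Theory Num.Theory.
Local Open Scope ring_scope.

Section Defs.
Variables (R : realFieldType) (V : finType).

Definition nbhd (e : rel V) (v : V) : {set V} := [set u | e v u].

Definition symdiff (A B : {set V}) : {set V} := (A :\: B) :|: (B :\: A).

Definition lipschitz (e : rel V) (fv : {set V} -> R) (Kv : R) (v : V) : Prop :=
  forall A A' : {set V}, A \subset nbhd e v -> A' \subset nbhd e v ->
    `|fv A - fv A'| <= Kv * #|symdiff A A'|%:R / #|nbhd e v|%:R.

Definition sigmaT (p q : nat) (T : {set V}) (v : V) : R :=
  if v \in T then q%:R else - p%:R.

Definition xi (e : rel V) (f : V -> {set V} -> R) (p q n : nat) (T : {set V}) : R :=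
  ((p * q * n)%N%:R)^-1 * \sum_(v : V) sigmaT p q T v * f v (T :&: nbhd e v).

Definition restricted_partitions (Pi : {set {set V}}) (r : nat) : {set {set {set V}}} :=
  [set P : {set {set V}} | [&& partition P [set: V],
      [forall S in P, #|S| == r] &
      [forall S in P, [exists X in Pi, S \subset X]]]].

(* the possible values of T_{B,P}: exactly p vertices from each block of P *)
Definition selections (P : {set {set V}}) (p : nat) : {set {set V}} :=
  [set T : {set V} | [forall S in P, #|T :&: S| == p]].

End Defs.

Definition avg (R : realFieldType) (X : finType) (A : {set X}) (F : X -> R) : R :=
  (#|A|%:R)^-1 * \sum_(x in A) F x.

(* E_B(xi | P): B_i i.i.d. uniform p-subsets, i.e. T uniform among selections *)
Definition cond_exp_xi (R : realFieldType) (V : finType) (e : rel V)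
  (f : V -> {set V} -> R) (p q n : nat) (P : {set {set V}}) : R :=
  avg (selections P p) (xi e f p q n).

From HB Require Import structures.
From mathcomp Require Import all_boot all_order all_algebra.
From mathcomp Require Import fingroup perm.
From mathcomp Require Import ring lra zify.
Import Order.TTheory GRing.Theory Num.Theory.
Local Open Scope ring_scope.

(* For a fixed partition P, the conditional expectation E_B(xi | P) splits into one
   term per vertex v.  Pairing every selection T with v in T and u notin T (u in the
   block B of v) with the selection obtained by swapping u and v turns the term of v
   into a sum of differences f_v(T cap N(v)) - f_v(T' cap N(v)); the two arguments
   differ at most in u, and only when u is a neighbour of v, so counting the pairs
   gives |E_B(xi | P)| <= sum_v K_v w_P(v) / (d(v) n r (r-1)), where w_P(v) is the
   number of neighbours of v in its block of P.  For P uniform, a fixed vertex of the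
   part X_v of Pi containing v shares the block of v with probability
   (r-1)/(|X_v|-1), so E_P w_P(v) <= d(v) (r-1)/(|X_v|-1).  Finally |X_v| >= r >= 2
   gives 1/(|X_v|-1) <= 2/|X_v|, and sum_v 1/|X_v| = |Pi|. *)

Lemma sum_mulrn_card (M : nmodType) (I J : finType) (A : {set I}) (B : {set J})
    (E : I -> J -> bool) (h : J -> M) :
  \sum_(j in B) h j *+ #|[set i in A | E i j]| =
  \sum_(i in A) \sum_(j in B | E i j) h j.
Proof.
rewrite (exchange_big_dep (mem B)) /=; last by move=> i j _ /andP[].
apply: eq_bigr => j jB; rewrite -sumr_const; apply: eq_bigl => i.
by rewrite inE jB.
Qed.

Lemma double_count (I J : finType) (A : {set I}) (B : {set J}) (E : I -> J -> bool) :
  (\sum_(j in B) #|[set i in A | E i j]| =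
   \sum_(i in A) #|[set j in B | E i j]|)%N.
Proof.
have cardE (K : finType) (C : {set K}) (Q : pred K) :
    #|[set k in C | Q k]| = (\sum_(k in C | Q k) 1)%N.
  by rewrite -sum1_card; apply: eq_bigl => k; rewrite inE.
under eq_bigr do rewrite cardE.
rewrite (exchange_big_dep (mem A)) /=; last by move=> j i _ /andP[].
by apply: eq_bigr => i iA; rewrite cardE; apply: eq_bigl => j; rewrite iA.
Qed.

Lemma reindex_involutive {M : nmodType} {X : finType} {phi : X -> X} {A : {set X}}
    {Q : pred X} {h : X -> M} :
  involutive phi -> {in A, forall x, phi x \in A} ->
  \sum_(x in A | Q x) h x = \sum_(x in A | Q (phi x)) h (phi x).
Proof.
move=> phiK phiA; rewrite (reindex_inj (inv_inj phiK)) /=.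
apply: eq_bigl => x; congr (_ && _); apply/idP/idP => [/phiA|]; last exact: phiA.
by rewrite phiK.
Qed.

Lemma imset_involutive {X : finType} {phi : X -> X} :
  involutive phi -> involutive (fun A : {set X} => phi @: A).
Proof.
move=> phiK A; apply/setP => x; apply/imsetP/idP => [[y /imsetP[z zA ->] ->]|xA].
  by rewrite phiK.
by exists (phi x); rewrite ?phiK // imset_f.
Qed.

Lemma trivIset_mem_eq {V : finType} {Pi : {set {set V}}} {B X : {set V}} {a b : V} :
  trivIset Pi -> B \in Pi -> a \in B -> b \in B -> X \in Pi -> (a \in X) = (b \in X).
Proof.
move=> tPi BPi aB bB XPi; apply/idP/idP => xX.
- by rewrite -(def_pblock tPi XPi xX) (def_pblock tPi BPi aB).
- by rewrite -(def_pblock tPi XPi xX) (def_pblock tPi BPi bB).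
Qed.

Section Transposition.
Context {V : finType} (a b : V).

Lemma mem_imset_tperm (x : V) (A : {set V}) : (x \in tperm a b @: A) = (tperm a b x \in A).
Proof. by rewrite -{1}(tpermK a b x) mem_imset //; apply: perm_inj. Qed.

Lemma imset_tperm_id (A : {set V}) : (a \in A) = (b \in A) -> tperm a b @: A = A.
Proof.
move=> abA; apply/setP => x; rewrite mem_imset_tperm.
by case: tpermP => [->|->|]; rewrite ?abA.
Qed.

Lemma imset_tpermK : involutive (fun A : {set V} => tperm a b @: A).
Proof. exact/imset_involutive/tpermK. Qed.

Lemma pblock_imset_tperm (P : {set {set V}}) (x : V) :
  partition P [set: V] ->
  pblock [set tperm a b @: (S : {set V}) | S in P] x = tperm a b @: pblock P (tperm a b x).
Proof.
move=> partP; have tau_inj : injective (tperm a b) := @perm_inj _ _.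
have cx : tperm a b x \in cover P by rewrite (cover_partition partP) inE.
apply: def_pblock.
- have := partP; rewrite -(imset_partition _ _ tau_inj) imset_tperm_id ?inE //.
  exact: partition_trivIset.
- by rewrite imset_f // pblock_mem.
- by rewrite mem_imset_tperm mem_pblock.
Qed.

End Transposition.
Arguments imset_tperm_id {V a b A}.

Lemma card_involutive {X : finType} {phi : X -> X} {A : {set X}} {Q : pred X} :
  involutive phi -> {in A, forall x, phi x \in A} ->
  #|[set x in A | Q x]| = #|[set x in A | Q (phi x)]|.
Proof.
move=> phiK phiA; rewrite -(card_imset _ (inv_inj phiK)); apply: eq_card => y.
rewrite -{1}(phiK y) mem_imset ?inE ?phiK; last exact: inv_inj.
congr (_ && _); apply/idP/idP => [/phiA|/phiA]; by rewrite ?phiK.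
Qed.

Lemma card_symdiff_swap {V : finType} {N T : {set V}} {u v : V} :
  v \notin N -> v \in T -> u \notin T ->
  (#|symdiff (T :&: N) (tperm u v @: T :&: N)| <= (u \in N))%N.
Proof.
move=> vN vT uT.
have sub : symdiff (T :&: N) (tperm u v @: T :&: N) \subset N :&: [set u].
  apply/subsetP => x; rewrite /symdiff !inE mem_imset_tperm.
  case: (x =P u) => [->|/eqP xu]; first by rewrite andbT; case/orP => /and3P[].
  case: (x =P v) => [->|/eqP xv]; first by rewrite (negbTE vN) !andbF.
  by rewrite tpermD 1?eq_sym //; case: (x \in T); case: (x \in N).
apply: leq_trans (subset_leq_card sub) _.
case: (boolP (u \in N)) => uN; first by rewrite (setIidPr _) ?cards1 ?sub1set.
suff -> : N :&: [set u] = set0 by rewrite cards0.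
by apply/setP => x; rewrite !inE; case: eqP => [->|]; rewrite ?(negbTE uN) ?andbF.
Qed.

Section Selections.
Context {V : finType} {P : {set {set V}}} {p q : nat}.

Lemma selectionsP (T : {set V}) :
  reflect {in P, forall S, #|T :&: S| = p} (T \in selections P p).
Proof.
rewrite inE; apply: (iffP forallP) => [hT S SP|hT S].
  by apply/eqP; exact: implyP (hT S) SP.
by apply/implyP => /hT ->.
Qed.

Hypothesis tP : trivIset P.
Context {B : {set V}} {v : V}.
Hypotheses (BP : B \in P) (vB : v \in B).

Lemma selections_tperm (x y : V) (T : {set V}) : x \in B -> y \in B ->
  T \in selections P p -> tperm x y @: T \in selections P p.
Proof.
move=> xB yB /selectionsP hT; apply/selectionsP => S SP.
rewrite -{1}(imset_tperm_id (trivIset_mem_eq tP BP xB yB SP)) -imsetI.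
  by rewrite card_imset ?hT //; apply: perm_inj.
by move=> ? ? _ _; apply: perm_inj.
Qed.

Hypothesis cardB : #|B| = (p + q)%N.

Lemma card_block_notin_selection (T : {set V}) :
  T \in selections P p -> v \in T -> #|[set u in B :\ v | u \notin T]| = q.
Proof.
move=> /selectionsP/(_ B BP) TB vT.
have <- : #|B :\: T| = q by rewrite cardsD setIC TB cardB addKn.
apply: eq_card => x; rewrite !inE.
by case: (x =P v) => [->|]; rewrite ?vT ?andbF // andbC.
Qed.

Lemma card_block_in_selection (T : {set V}) :
  T \in selections P p -> v \notin T -> #|[set u in B :\ v | u \in T]| = p.
Proof.
move=> /selectionsP/(_ B BP) <- vT; apply: eq_card => x; rewrite !inE.
by case: (x =P v) => [->|]; rewrite ?(negbTE vT) ?andbF // andbC.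
Qed.

Lemma card_selections_swap (u : V) : u \in B :\ v ->
  ((p + q) * (p + q).-1 * #|[set T in selections P p | (v \in T) && (u \notin T)]|
   = p * q * #|selections P p|)%N.
Proof.
move=> uBv; set Sel := selections P p.
have selB T : T \in Sel -> #|T :&: B| = p by move/selectionsP; apply.
(* Swapping x with u (resp. with v) shows that [c x] (resp. the number of
   selections containing x) does not depend on x; double counting then
   determines both. *)
pose Selv := [set T in Sel | v \in T].
pose c x := #|[set T in Selv | x \notin T]|.
have -> : [set T in Sel | (v \in T) && (u \notin T)] = [set T in Selv | u \notin T].
  by apply/setP => T; rewrite !inE andbA.
have c_const x : x \in B :\ v -> c x = c u.
  case/setD1P: uBv => uv uB /setD1P[xv xB].
  rewrite /c (card_involutive (imset_tpermK x u)).
    by apply: eq_card => T; rewrite !inE mem_imset_tperm tpermL.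
  move=> T /setIdP[TS vT]; apply/setIdP; split; first exact: selections_tperm.
  by rewrite mem_imset_tperm tpermD // eq_sym.
have sum_c : (\sum_(x in B :\ v) c x = #|Selv| * q)%N.
  rewrite double_count -sum_nat_const; apply: eq_bigr => T /setIdP[TS vT].
  exact: card_block_notin_selection.
have N_const x : x \in B -> #|[set T in Sel | x \in T]| = #|Selv|.
  move=> xB; rewrite (card_involutive (imset_tpermK v x)); last first.
    by move=> T; apply: selections_tperm.
  by apply: eq_card => T; rewrite !inE mem_imset_tperm tpermR.
have sum_N : (\sum_(x in B) #|[set T in Sel | x \in T]| = #|Sel| * p)%N.
  rewrite double_count -sum_nat_const; apply: eq_bigr => T TS.
  by rewrite -(selB T TS) setIC; apply: eq_card => x; rewrite !inE.
have cBv : #|B :\ v| = (p + q).-1 by rewrite -cardB (cardsD1 v B) vB.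
rewrite (eq_bigr (fun=> #|Selv|) N_const) sum_nat_const cardB in sum_N.
rewrite (eq_bigr (fun=> c u) c_const) sum_nat_const cBv in sum_c.
rewrite -/(c u); nia.
Qed.

Lemma sum_sigmaT_swap {R : realFieldType} (g : {set V} -> R) :
  \sum_(T in selections P p) sigmaT R p q T v * g T =
  \sum_(u in B :\ v) \sum_(T in selections P p | (v \in T) && (u \notin T))
     (g T - g (tperm u v @: T)).
Proof.
set Sel := selections P p.
have sum_in : \sum_(T in Sel | v \in T) sigmaT R p q T v * g T =
    \sum_(u in B :\ v) \sum_(T in Sel | (v \in T) && (u \notin T)) g T.
  transitivity (\sum_(T in [set T in Sel | v \in T])
                  g T *+ #|[set u in B :\ v | u \notin T]|).
    apply: eq_big => [T|T /andP[TS vT]]; first by rewrite inE.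
    by rewrite /sigmaT vT mulr_natl card_block_notin_selection.
  rewrite sum_mulrn_card; apply: eq_bigr => u _; apply: eq_bigl => T.
  by rewrite inE andbA.
have sum_out : \sum_(T in Sel | v \notin T) sigmaT R p q T v * g T =
    - \sum_(u in B :\ v) \sum_(T in Sel | (v \notin T) && (u \in T)) g T.
  transitivity (- \sum_(T in [set T in Sel | v \notin T])
                    g T *+ #|[set u in B :\ v | u \in T]|).
    rewrite -sumrN; apply: eq_big => [T|T /andP[TS vT]]; first by rewrite inE.
    by rewrite /sigmaT (negbTE vT) mulNr mulr_natl card_block_in_selection.
  rewrite sum_mulrn_card; congr (- _); apply: eq_bigr => u _; apply: eq_bigl => T.
  by rewrite inE andbA.
rewrite (bigID (fun T : {set V} => v \in T)) /= sum_in sum_out -sumrB.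
apply: eq_bigr => u /setD1P[uv uB]; rewrite sumrB.
rewrite [X in _ - X](reindex_involutive (imset_tpermK u v)); last first.
  by move=> T; apply: selections_tperm.
congr (_ - _); apply: eq_bigl => T; rewrite !mem_imset_tperm tpermL tpermR.
by case: (v \in T); case: (u \in T); rewrite ?andbF.
Qed.

Lemma norm_sum_sigmaT_le {R : realFieldType} {e : rel V} {fv : {set V} -> R} {Kv : R} :
  ~~ e v v -> 0 <= Kv -> lipschitz e fv Kv v ->
  ((p + q) * (p + q).-1)%N%:R *
    `|\sum_(T in selections P p) sigmaT R p q T v * fv (T :&: nbhd e v)|
  <= Kv / #|nbhd e v|%:R * #|(B :\ v) :&: nbhd e v|%:R * (p * q * #|selections P p|)%N%:R.
Proof.
move=> evv K0 lip; set N := nbhd e v; set Sel := selections P p.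
pose c u : R := if u \in N then Kv / #|N|%:R else 0.
have vN : v \notin N by rewrite inE.
have swap_le u T : T \in Sel -> v \in T -> u \notin T ->
    `|fv (T :&: N) - fv (tperm u v @: T :&: N)| <= c u.
  move=> TS vT uT; apply: le_trans (lip _ _ (subsetIr _ _) (subsetIr _ _)) _.
  have := card_symdiff_swap vN vT uT; rewrite /c mulrAC.
  case: (u \in N) => /= [le1|]; last by rewrite leqn0 => /eqP ->; rewrite mulr0.
  by rewrite ler_piMr ?divr_ge0 //; move: le1; rewrite -(ler_nat R).
rewrite (sum_sigmaT_swap (fun T => fv (T :&: N))).
apply: le_trans (ler_wpM2l (ler0n _ _) (ler_norm_sum _ _ _)) _.
apply: le_trans (ler_wpM2l (ler0n _ _) (ler_sum _ (fun u _ => ler_norm_sum _ _ _))) _.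
have count_swap u : u \in B :\ v -> ((p + q) * (p + q).-1)%N%:R *
    \sum_(T in Sel | (v \in T) && (u \notin T))
      `|fv (T :&: N) - fv (tperm u v @: T :&: N)| <= c u * (p * q * #|Sel|)%N%:R.
  move=> uBv; have := card_selections_swap _ uBv; rewrite -/Sel => <-.
  rewrite (natrM _ _ #|_|) mulrCA ler_wpM2l //.
  rewrite mulr_natr -sumr_const big_set /=.
  by apply: ler_sum => T /andP[TS /andP[vT uT]]; apply: swap_le.
have sum_c : \sum_(u in B :\ v) c u = Kv / #|N|%:R * #|(B :\ v) :&: N|%:R.
  rewrite -big_mkcondr /= (eq_bigl (mem ((B :\ v) :&: N))) => [|u].
    by rewrite sumr_const mulr_natr.
  by rewrite -[RHS]/(u \in _) !inE.
rewrite mulr_sumr -sum_c mulr_suml; exact: ler_sum.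
Qed.

End Selections.

Lemma norm_cond_exp_xi_le (R : realFieldType) (V : finType) (n p q : nat) (e : rel V)
    (f : V -> {set V} -> R) (K : V -> R) (P : {set {set V}}) :
  (0 < n)%N -> (0 < p)%N -> (0 < q)%N -> irreflexive e ->
  (forall v, 0 <= K v) -> (forall v, lipschitz e (f v) (K v) v) ->
  partition P [set: V] -> {in P, forall S : {set V}, #|S| = (p + q)%N} ->
  `|cond_exp_xi e f p q n P| <=
  \sum_(v : V) K v / (#|nbhd e v| * (n * (p + q) * (p + q).-1))%N%:R *
               #|(pblock P v :\ v) :&: nbhd e v|%:R.
Proof.
move=> n0 p0 q0 irr K0 lip partP cardP; set Sel := selections P p.
have tP := partition_trivIset partP.
pose bound v := K v / (#|nbhd e v| * (n * (p + q) * (p + q).-1))%N%:R *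
                #|(pblock P v :\ v) :&: nbhd e v|%:R.
have bound0 v : 0 <= bound v by rewrite mulr_ge0 ?divr_ge0.
have vertex_le v : `|\sum_(T in Sel) sigmaT R p q T v * f v (T :&: nbhd e v)| <=
    #|Sel|%:R * (p * q * n)%N%:R * bound v.
  have cv : v \in cover P by rewrite (cover_partition partP) inE.
  have vB : v \in pblock P v by rewrite mem_pblock.
  have := norm_sum_sigmaT_le tP (pblock_mem cv) vB
    (cardP _ (pblock_mem cv)) (negbT (irr v)) (K0 v) (lip v).
  have r_gt0 : (0 < (p + q) * (p + q).-1)%N by rewrite muln_gt0; lia.
  rewrite -ler_pdivlMl ?ltr0n // => /le_trans; apply; rewrite le_eqVlt; apply/predU1l.
  rewrite /bound /Sel (natrM _ #|nbhd e v|) invfM.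
  (* Abstracting the inverse degree spares [field] the side condition that the
     degree is nonzero, which is not assumed here. *)
  set dinv := #|nbhd e v|%:R^-1; rewrite !natrM; field.
  by rewrite -natrD !pnatr_eq0 -!lt0n n0 addn_gt0 p0 andbT; lia.
rewrite /cond_exp_xi /avg /xi -/Sel -mulr_sumr exchange_big /=.
have [->|Sel_gt0] := posnP #|Sel|.
  by rewrite invr0 mul0r normr0; apply: sumr_ge0 => v _; apply: bound0.
have pqn_gt0 : (0 < p * q * n)%N by rewrite !muln_gt0 p0 q0.
rewrite !normrM !normfV !normr_nat !ler_pdivrMl ?ltr0n //.
apply: le_trans (ler_norm_sum _ _ _) _; rewrite !mulr_sumr; apply: ler_sum => v _.
by rewrite mulrCA mulrA; apply: vertex_le.
Qed.

Section RestrictedPartitions.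
Context {V : finType} {Pi : {set {set V}}} {r : nat}.

Lemma restricted_partitionsP (P : {set {set V}}) :
  reflect [/\ partition P [set: V], {in P, forall S : {set V}, #|S| = r}
            & {in P, forall S : {set V}, exists2 X, X \in Pi & S \subset X}]
          (P \in restricted_partitions Pi r).
Proof.
rewrite inE; apply: (iffP and3P).
  case=> partP /forallP cardP /forallP subP.
  split=> // S SP; first by apply/eqP; exact: implyP (cardP S) SP.
  by have /existsP[X /andP[]] := implyP (subP S) SP; exists X.
case=> partP cardP subP; split=> //; apply/forallP => S; apply/implyP => SP.
  by rewrite cardP.
by have [X XPi SX] := subP S SP; apply/existsP; exists X; rewrite XPi.
Qed.

Hypothesis partPi : partition Pi [set: V].

Lemma restricted_partitions_tperm (X : {set V}) (a b : V) (P : {set {set V}}) :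
  X \in Pi -> a \in X -> b \in X -> P \in restricted_partitions Pi r ->
  [set tperm a b @: (S : {set V}) | S in P] \in restricted_partitions Pi r.
Proof.
move=> XPi aX bX /restricted_partitionsP[partP cardP subP].
have tau_inj : injective (tperm a b) := @perm_inj _ _.
apply/restricted_partitionsP; split.
- by rewrite -(imset_tperm_id (_ : (a \in setT) = (b \in setT))) ?inE // imset_partition.
- by move=> _ /imsetP[S SP ->]; rewrite card_imset ?cardP.
move=> _ /imsetP[S SP ->]; have [Y YPi SY] := subP S SP; exists Y => //.
rewrite -(imset_tperm_id (trivIset_mem_eq (partition_trivIset partPi) XPi aX bX YPi)).
exact: imsetS.
Qed.

Lemma pblock_sub_restricted {P : {set {set V}}} (v : V) :
  P \in restricted_partitions Pi r -> pblock P v \subset pblock Pi v.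
Proof.
case/restricted_partitionsP => partP _ subP.
have vP : v \in cover P by rewrite (cover_partition partP) inE.
have [Y YPi sY] := subP _ (pblock_mem vP).
have vY : v \in Y by apply: (subsetP sY); rewrite mem_pblock.
by rewrite (def_pblock (partition_trivIset partPi) YPi vY).
Qed.

Lemma card_restricted_same_block (u v : V) : u \in pblock Pi v :\ v ->
  (#|pblock Pi v|.-1 * #|[set P in restricted_partitions Pi r | u \in pblock P v]|
   = r.-1 * #|restricted_partitions Pi r|)%N.
Proof.
move=> /setD1P[uv uX]; set X := pblock Pi v; set RP := restricted_partitions Pi r.
have vPi : v \in cover Pi by rewrite (cover_partition partPi) inE.
have XPi : X \in Pi := pblock_mem vPi.
have vX : v \in X by rewrite mem_pblock.
pose m x := #|[set P in RP | x \in pblock P v]|.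
have m_const x : x \in X :\ v -> m x = m u.
  case/setD1P=> xv xX.
  pose tau (P : {set {set V}}) := [set tperm x u @: (S : {set V}) | S in P].
  have tauK : involutive tau := imset_involutive (imset_tpermK x u).
  rewrite /m (card_involutive tauK); last first.
    by move=> P; apply: restricted_partitions_tperm XPi xX uX.
  apply: eq_card => P; rewrite !inE; apply: andb_id2l => /and3P[partP _ _].
  by rewrite pblock_imset_tperm // tpermD ?(mem_imset_tperm x u) ?tpermL.
have sum_m : (\sum_(x in X :\ v) m x = #|RP| * r.-1)%N.
  rewrite double_count -sum_nat_const; apply: eq_bigr => P PRP.
  have /restricted_partitionsP[partP cardP _] := PRP.
  have vP : v \in cover P by rewrite (cover_partition partP) inE.
  rewrite -(cardP _ (pblock_mem vP)) (cardsD1 v (pblock P v)) mem_pblock vP add1n /=.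
  apply: eq_card => x; rewrite !inE -andbA; congr (_ && _).
  case: (boolP (x \in pblock P v)) => [xP|_]; last by rewrite andbF.
  by rewrite (subsetP (pblock_sub_restricted v PRP) _ xP).
have cXv : #|X :\ v| = #|X|.-1 by rewrite (cardsD1 v X) vX.
rewrite (eq_bigr (fun=> m u) m_const) sum_nat_const cXv in sum_m.
by rewrite -/(m u) sum_m mulnC.
Qed.

Lemma sum_card_block_le (v : V) (N : {set V}) :
  (#|pblock Pi v|.-1 * \sum_(P in restricted_partitions Pi r) #|(pblock P v :\ v) :&: N|
   <= #|N| * r.-1 * #|restricted_partitions Pi r|)%N.
Proof.
set RP := restricted_partitions Pi r.
have -> : (\sum_(P in RP) #|(pblock P v :\ v) :&: N| =
           \sum_(u in N) #|[set P in RP | u \in pblock P v :\ v]|)%N.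
  rewrite double_count; apply: eq_bigr => P _.
  by apply: eq_card => u; rewrite !inE andbC.
rewrite big_distrr -mulnA -sum_nat_const /=; apply: leq_sum => u _.
case: (boolP (u \in pblock Pi v :\ v)) => [uXv|uXv].
  rewrite -(card_restricted_same_block _ _ uXv) leq_mul2l; apply/orP; right.
  by apply: subset_leq_card; apply/subsetP => P; rewrite !inE => /andP[-> /andP[]].
suff -> : [set P in RP | u \in pblock P v :\ v] = set0 by rewrite cards0 muln0.
apply/eqP; rewrite -subset0; apply/subsetP => P /setIdP[PRP /setD1P[uv uP]].
by move: uXv; rewrite !inE uv (subsetP (pblock_sub_restricted v PRP) _ uP).
Qed.

End RestrictedPartitions.

Section Average.
Context {R : realFieldType} {X : finType} {A : {set X}}.

Lemma ler_avg (F G : X -> R) : {in A, forall x, F x <= G x} -> avg A F <= avg A G.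
Proof. by move=> FG; rewrite ler_wpM2l ?invr_ge0 // ler_sum. Qed.

Lemma avg_lincomb (I : finType) (c : I -> R) (F : I -> X -> R) :
  avg A (fun x => \sum_i c i * F i x) = \sum_i c i * avg A (F i).
Proof.
rewrite /avg exchange_big mulr_sumr; apply: eq_bigr => i _.
by rewrite -mulr_sumr mulrCA.
Qed.

End Average.

Lemma avg_card_block_le {R : realFieldType} {V : finType} {Pi : {set {set V}}} (r : nat)
    {v : V} (N : {set V}) :
  partition Pi [set: V] -> (1 < #|pblock Pi v|)%N ->
  avg (restricted_partitions Pi r) (fun P => #|(pblock P v :\ v) :&: N|%:R)
  <= #|N|%:R * r.-1%:R / #|pblock Pi v|.-1%:R :> R.
Proof.
move=> partPi Xgt1; rewrite /avg; set RP := restricted_partitions Pi r.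
have [->|RPgt0] := posnP #|RP|; first by rewrite invr0 mul0r !mulr_ge0 ?invr_ge0.
rewrite ler_pdivrMl ?ltr0n // mulrA ler_pdivlMr ?ltr0n; last by rewrite -subn1 subn_gt0.
rewrite -natr_sum -!natrM ler_nat mulnC [in leqRHS]mulnC.
exact: sum_card_block_le.
Qed.

Lemma invr_subr1_le (R : realFieldType) (x : R) : 2 <= x -> (x - 1)^-1 <= 2 * x^-1.
Proof.
move=> x_ge2; rewrite -[2]invrK -invfM lef_pV2 ?posrE; lra.
Qed.

Lemma sum_inv_card_pblock (R : realFieldType) (V : finType) (Pi : {set {set V}}) :
  partition Pi [set: V] -> \sum_(v : V) (#|pblock Pi v|%:R : R)^-1 = #|Pi|%:R.
Proof.
move=> partPi; have tPi := partition_trivIset partPi.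
rewrite (eq_bigl (mem (cover Pi))) => [|v]; last by rewrite (cover_partition partPi) !inE.
rewrite big_trivIset // -sumr_const; apply: eq_bigr => X XPi.
rewrite (eq_bigr (fun=> (#|X|%:R)^-1)) => [|v vX]; last by rewrite (def_pblock tPi XPi vX).
rewrite sumr_const -[LHS]mulr_natr mulVf // pnatr_eq0 cards_eq0.
exact: partition_neq0 partPi XPi.
Qed.

Lemma scaled_avg_card_block_le (R : realFieldType) (V : finType) (Pi : {set {set V}})
    (n r : nat) (v : V) (N : {set V}) (Kv Km : R) :
  partition Pi [set: V] -> (0 < n)%N -> (1 < r)%N -> (1 < #|pblock Pi v|)%N ->
  (0 < #|N|)%N -> 0 <= Kv <= Km ->
  Kv / (#|N| * (n * r * r.-1))%N%:R *
    avg (restricted_partitions Pi r) (fun P => #|(pblock P v :\ v) :&: N|%:R)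
  <= 2 * Km / (r * n)%N%:R * (#|pblock Pi v|%:R)^-1.
Proof.
move=> partPi n_gt0 r_gt1 X_gt1 N_gt0 /andP[Kv_ge0 Kv_le].
set x : R := #|pblock Pi v|%:R.
have x_ge2 : 2 <= x by rewrite -[2]/(2%:R) ler_nat.
apply: le_trans (ler_wpM2l _ (avg_card_block_le r N partPi X_gt1)) _.
  by rewrite divr_ge0.
have -> : #|pblock Pi v|.-1%:R = x - 1 by rewrite -subn1 natrB 1?ltnW.
have -> : Kv / (#|N| * (n * r * r.-1))%N%:R * (#|N|%:R * r.-1%:R / (x - 1)) =
          Kv / (r * n)%N%:R * (x - 1)^-1.
  rewrite !natrM; field; rewrite -?natrM !pnatr_eq0 -!lt0n n_gt0 N_gt0 /=.
  by apply/and3P; split; [lra|lia|lia].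
have -> : 2 * Km / (r * n)%N%:R * x^-1 = Km / (r * n)%N%:R * (2 * x^-1).
  by rewrite mulrCA !mulrA.
have rn_inv_ge0 : 0 <= (r * n)%N%:R^-1 :> R by rewrite invr_ge0.
by rewrite ler_pM ?divr_ge0 ?ler_wpM2r ?invr_subr1_le ?invr_ge0 //; lra.
Qed.

Theorem mainTheorem16 (R : realFieldType) (V : finType) (n p q : nat)
  (e : rel V) (f : V -> {set V} -> R) (K : V -> R) (Pi : {set {set V}}) :
  (0 < n)%N -> (0 < p)%N -> (0 < q)%N ->
  #|V| = ((p + q) * n)%N ->
  symmetric e -> irreflexive e ->
  (forall v : V, exists u : V, e v u) ->
  (forall v : V, f v set0 = 0) ->
  (forall v : V, 0 < K v) ->
  (forall v : V, lipschitz e (f v) (K v) v) ->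
  partition Pi [set: V] ->
  (forall X : {set V}, X \in Pi -> (p + q %| #|X|)%N) ->
  avg (restricted_partitions Pi (p + q))
      (fun P => `|cond_exp_xi e f p q n P|)
  <= 2 * \big[Num.max/0]_(v : V) K v * #|Pi|%:R / ((p + q) * n)%N%:R.
Proof.
move=> n_gt0 p_gt0 q_gt0 _ _ irr has_nbr _ K_gt0 lip partPi dvd_Pi.
have K_ge0 v : 0 <= K v := ltW (K_gt0 v).
have nbhd_gt0 v : (0 < #|nbhd e v|)%N.
  by have [u evu] := has_nbr v; apply/card_gt0P; exists u; rewrite inE.
have pblock_gt1 v : (1 < #|pblock Pi v|)%N.
  have vPi : v \in cover Pi by rewrite (cover_partition partPi) inE.
  have : (0 < #|pblock Pi v|)%N by apply/card_gt0P; exists v; rewrite mem_pblock.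
  by move/dvdn_leq/(_ (dvd_Pi _ (pblock_mem vPi))); lia.
apply: le_trans.
  apply: ler_avg => P /restricted_partitionsP[partP cardP _].
  exact: norm_cond_exp_xi_le.
rewrite avg_lincomb mulrAC -(sum_inv_card_pblock _ _ _ partPi) mulr_sumr.
apply: ler_sum => v _; apply: scaled_avg_card_block_le; rewrite ?K_ge0 ?le_bigmax //.
lia.
Qed.
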